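(* Let $(M,g,S)$ be as in the context, let $p\in M$, and let $u\in T_pM$ induce an $S$-basis, with $\varphi=\angle(u,Su)$. Then: (i) $u$ is space-like if and only if $\varphi\in(\frac{\pi}{4},\frac{\pi}{2})$; (ii) $u$ is isotropic if and only if $\varphi=\frac{\pi}{2}$; (iii) $u$ is time-like if and only if $\varphi\in(\frac{\pi}{2},\frac{3\pi}{4})$.
   Context: $M$ is a 4-dimensional differentiable manifold with a positive definite (Riemannian) metric $g$ and a tensor field $S$ of type $(1,1)$ whose components in some local coordinate system form the matrix with rows $(0,1,0,0)$, $(0,0,1,0)$, $(0,0,0,1)$, $(-1,0,0,0)$; hence $S^4=-\mathrm{id}$. It is assumed that $g(Su,Sv)=g(u,v)$ for all vector fields $u,v$. The associated metric is $\tilde g(u,v)=g(u,Sv)+g(Su,v)$. A vector $u$ is space-like if $\tilde g(u,u)>0$, time-like if $\tilde g(u,u)<0$, and isotropic if $u\neq 0$ and $\tilde g(u,u)=0$. A vector $u\in T_pM$ induces an $S$-basis if $\{u,Su,S^2u,S^3u\}$ is a basis of $T_pM$. Norms and angles are taken with respect to $g$: $\|u\|=\sqrt{g(u,u)}$, $\cos\angle(u,v)=g(u,v)/(\|u\|\|v\|)$. It is known that if $u$ induces an $S$-basis then $\varphi=\angle(u,Su)$ satisfies $\frac{\pi}{4}<\varphi<\frac{3\pi}{4}$. *)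

From HB Require Import structures.
From mathcomp Require Import all_boot all_order all_algebra.
From mathcomp Require Import reals trigo.
Set Implicit Arguments. Unset Strict Implicit. Unset Printing Implicit Defensive.
Import Order.TTheory GRing.Theory Num.Theory.
Local Open Scope ring_scope.

(* The tangent space T_pM is identified, via the local coordinate system in
   which S has the prescribed matrix, with column vectors 'cV[R]_4. *)

Definition Smx {R : realType} : 'M[R]_4 :=
  \matrix_(i < 4, j < 4)
    (if (i == 3 :> nat) then (if (j == 0 :> nat) then -1 else 0)
     else (if (j == i.+1 :> nat) then 1 else 0)).

Definition gform {R : realType} (G : 'M[R]_4) (u v : 'cV[R]_4) : R :=
  (u^T *m G *m v) 0 0.

Definition riemannian_metric {R : realType} (G : 'M[R]_4) : Prop :=
  G^T = G /\ (forall v : 'cV[R]_4, v != 0 -> 0 < gform G v v).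

Definition S_isometric {R : realType} (G : 'M[R]_4) : Prop :=
  forall u v : 'cV[R]_4, gform G (Smx *m u) (Smx *m v) = gform G u v.

Definition gtilde {R : realType} (G : 'M[R]_4) (u v : 'cV[R]_4) : R :=
  gform G u (Smx *m v) + gform G (Smx *m u) v.

Definition space_like {R : realType} (G : 'M[R]_4) (u : 'cV[R]_4) : Prop :=
  0 < gtilde G u u.
Definition time_like {R : realType} (G : 'M[R]_4) (u : 'cV[R]_4) : Prop :=
  gtilde G u u < 0.
Definition isotropic {R : realType} (G : 'M[R]_4) (u : 'cV[R]_4) : Prop :=
  u != 0 /\ gtilde G u u = 0.

(* u induces an S-basis: {u, Su, S^2u, S^3u} is a basis of T_pM, i.e. the
   4x4 matrix whose j-th column is S^j u is invertible. *)
Definition induces_S_basis {R : realType} (u : 'cV[R]_4) : Prop :=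
  (\matrix_(i < 4, j < 4) ((Smx ^+ j *m u) i 0)) \in unitmx.

Definition gnorm {R : realType} (G : 'M[R]_4) (u : 'cV[R]_4) : R :=
  Num.sqrt (gform G u u).
Definition gangle {R : realType} (G : 'M[R]_4) (u v : 'cV[R]_4) : R :=
  acos (gform G u v / (gnorm G u * gnorm G v)).

From Pilot Require Import Defs.
From HB Require Import structures.
From mathcomp Require Import all_boot all_order all_algebra.
From mathcomp Require Import reals trigo.
From mathcomp Require Import ring lra.
Import Order.TTheory GRing.Theory Num.Theory.
Local Open Scope ring_scope.

(* Write a = g(u,u) and b = g(u,Su). As S is a g-isometry with S^4 = -1, its
   g-adjoint is -S^3; hence g(u,S^2u) = 0, g(u,S^3u) = -b, g~(u,u) = 2b, and
   cos phi = b/a because |Su| = |u|. Positivity of g on a u - b (Su - S^3u),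
   which is nonzero because u induces an S-basis, gives 2b^2 < a^2, i.e.
   |cos phi| < cos (pi/4). The sign of b then places phi on one side of pi/2. *)

Section Coordinates.
Context {R : realType}.

Definition colv (c0 c1 c2 c3 : R) : 'cV[R]_4 :=
  \col_(i < 4) [:: c0; c1; c2; c3]`_i.

Lemma colv_eta (x : 'cV[R]_4) : x = colv (x 0 0) (x 1 0) (x 2 0) (x 3 0).
Proof.
apply/matrixP => i j; rewrite ord1 !mxE.
by case: i => [[|[|[|[|i]]]] Hi] //=; congr (x _ 0); apply/val_inj.
Qed.

Lemma colvN c0 c1 c2 c3 : - colv c0 c1 c2 c3 = colv (- c0) (- c1) (- c2) (- c3).
Proof.
apply/matrixP => i j; rewrite !mxE.
by case: i => [[|[|[|[|i]]]] Hi].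
Qed.

Lemma colv_eq0 c0 c1 c2 c3 :
  colv c0 c1 c2 c3 = 0 -> [/\ c0 = 0, c1 = 0, c2 = 0 & c3 = 0].
Proof.
move=> /matrixP E.
by split; [move: (E 0 0) | move: (E 1 0) | move: (E 2 0) | move: (E 3 0)];
  rewrite !mxE.
Qed.

Lemma mulSmx_colv c0 c1 c2 c3 : Smx *m colv c0 c1 c2 c3 = colv c1 c2 c3 (- c0).
Proof.
apply/matrixP => i j; rewrite ord1 !mxE !big_ord_recl big_ord0 !mxE /=.
by case: i => [[|[|[|[|i]]]] Hi] //=; rewrite ?mul0r ?mul1r ?mulN1r ?add0r ?addr0.
Qed.

Lemma mulSmx4 (x : 'cV[R]_4) : Smx *m (Smx *m (Smx *m (Smx *m x))) = - x.
Proof. by rewrite {1}(colv_eta x) !mulSmx_colv -colvN -colv_eta. Qed.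

Lemma mulmx_colv (M : 'M[R]_4) (c0 c1 c2 c3 : R) :
  M *m colv c0 c1 c2 c3 =
  c0 *: col 0 M + c1 *: col 1 M + c2 *: col 2 M + c3 *: col 3 M.
Proof.
apply/colP => i; rewrite !mxE !big_ord_recl big_ord0 !mxE /= addr0.
have -> : lift ord0 (lift ord0 (lift ord0 ord0)) = 3 :> 'I_4 by apply/val_inj.
have -> : lift ord0 (lift ord0 ord0) = 2 :> 'I_4 by apply/val_inj.
have -> : lift ord0 ord0 = 1 :> 'I_4 by apply/val_inj.
by rewrite ![M i _ * _]mulrC !addrA.
Qed.

End Coordinates.

Section SBasis.
Context {R : realType}.
Implicit Types (u : 'cV[R]_4).

(* [induces_S_basis u] is convertible to [S_basis_mx u \in unitmx]. *)
Definition S_basis_mx u : 'M[R]_4 := \matrix_(i < 4, j < 4) ((Smx ^+ j *m u) i 0).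

Lemma col_S_basis_mx u j : col j (S_basis_mx u) = Smx ^+ j *m u.
Proof. by apply/colP => i; rewrite !mxE. Qed.

Lemma S_basis_mx_colv u (c0 c1 c2 c3 : R) :
  S_basis_mx u *m colv c0 c1 c2 c3 =
  c0 *: u + c1 *: (Smx *m u) + c2 *: (Smx *m (Smx *m u))
  + c3 *: (Smx *m (Smx *m (Smx *m u))).
Proof.
rewrite mulmx_colv !col_S_basis_mx expr0 mul1mx expr1.
by rewrite !exprS expr0 mulr1 -!mulmxE !mulmxA.
Qed.

Lemma S_basis_free {u} : induces_S_basis u -> forall c0 c1 c2 c3 : R,
  c0 *: u + c1 *: (Smx *m u) + c2 *: (Smx *m (Smx *m u))
  + c3 *: (Smx *m (Smx *m (Smx *m u))) = 0 ->
  [/\ c0 = 0, c1 = 0, c2 = 0 & c3 = 0].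
Proof.
move=> u_basis c0 c1 c2 c3; rewrite -S_basis_mx_colv => /(canRL (mulKmx u_basis)).
by rewrite mulmx0; apply: colv_eq0.
Qed.

Lemma S_basis_neq0 {u} : induces_S_basis u -> u != 0.
Proof.
move=> u_basis; apply/eqP => u0.
have [] := S_basis_free u_basis 1 0 0 0; last by move=> /eqP; rewrite oner_eq0.
by rewrite u0 !mulmx0 !scaler0 !addr0.
Qed.

End SBasis.

Section GramForm.
Context {R : realType} {G : 'M[R]_4}.
Implicit Types (x y z : 'cV[R]_4) (k : R).

Lemma gformBl x y z : gform G (x - y) z = gform G x z - gform G y z.
Proof. by rewrite /gform linearB /= !mulmxBl [LHS]mxE [X in _ + X]mxE. Qed.

Lemma gformBr x y z : gform G z (x - y) = gform G z x - gform G z y.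
Proof. by rewrite /gform !mulmxBr [LHS]mxE [X in _ + X]mxE. Qed.

Lemma gformZl k x z : gform G (k *: x) z = k * gform G x z.
Proof. by rewrite /gform linearZ /= -!scalemxAl mxE. Qed.

Lemma gformZr k x z : gform G z (k *: x) = k * gform G z x.
Proof. by rewrite /gform -scalemxAr mxE. Qed.

Lemma gformNr x z : gform G z (- x) = - gform G z x.
Proof. by rewrite -scaleN1r gformZr mulN1r. Qed.

Lemma gformC : G^T = G -> forall x y, gform G x y = gform G y x.
Proof.
move=> G_sym x y; have trmx11 (A : 'M[R]_1) : A 0 0 = A^T 0 0 by rewrite mxE.
by rewrite /gform trmx11 !trmx_mul trmxK G_sym mulmxA.
Qed.

Lemma sqr_gnorm x : 0 <= gform G x x -> Defs.gnorm G x ^+ 2 = gform G x x.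
Proof. exact: sqr_sqrtr. Qed.

End GramForm.

Section SIsometry.
Context {R : realType} {G : 'M[R]_4}.
Hypotheses (G_sym : G^T = G) (G_Siso : S_isometric G).
Implicit Types (x y : 'cV[R]_4).

Local Notation S := (mulmx Smx).

Lemma gnorm_S x : Defs.gnorm G (S x) = Defs.gnorm G x.
Proof. by rewrite /Defs.gnorm G_Siso. Qed.

Lemma gform_S_adjoint x y : gform G (S x) y = - gform G x (S (S (S y))).
Proof. by rewrite -[gform G x _]G_Siso mulSmx4 gformNr opprK. Qed.

Lemma gform_S2 x : gform G x (S (S x)) = 0.
Proof.
have := gform_S_adjoint (S x) x; rewrite G_Siso (gformC G_sym); lra.
Qed.

Lemma gform_S3 x : gform G x (S (S (S x))) = - gform G x (S x).
Proof. by rewrite -[LHS]opprK -gform_S_adjoint (gformC G_sym). Qed.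

Lemma gtilde_diag x : gtilde G x x = 2 * gform G x (S x).
Proof. by rewrite /gtilde [gform G (S x) x](gformC G_sym) mulr_natl mulr2n. Qed.

Hypothesis G_pos : forall v : 'cV[R]_4, v != 0 -> 0 < gform G v v.

Lemma gform_S_bound u : induces_S_basis u ->
  2 * gform G u (S u) ^+ 2 < gform G u u ^+ 2.
Proof.
move=> u_basis; set a := gform G u u; set b := gform G u (S u).
pose v := S u - S (S (S u)).
have a_gt0 : 0 < a := G_pos _ (S_basis_neq0 u_basis).
have guv : gform G u v = 2 * b.
  by rewrite gformBr gform_S3 -/b; lra.
have gvv : gform G v v = 2 * a.
  by rewrite !gformBl !gformBr !G_Siso (gformC G_sym (S (S u))) gform_S2 -/a; lra.
have w_neq0 : a *: u - b *: v != 0.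
  apply/eqP => w0; move: a_gt0.
  suff [-> _ _ _] : [/\ a = 0, - b = 0, 0 = 0 :> R & b = 0] by rewrite ltxx.
  apply: (S_basis_free u_basis).
  by rewrite scale0r addr0 scaleNr addrAC -w0 scalerBr opprB addrA.
have := G_pos _ w_neq0.
rewrite gformBl !gformBr !gformZl !gformZr (gformC G_sym v u) guv gvv -/a.
nra.
Qed.

End SIsometry.

Section Arccos.
Context {R : realType}.
Implicit Types x y : R.

Lemma acos_itv x : -1 <= x <= 1 -> acos x \in `[0, pi].
Proof. by move=> x1; rewrite in_itv /= acos_ge0 ?acos_lepi. Qed.

Lemma ltr_acos : {in `[-1, 1] &, {mono (@acos R) : x y /~ y < x}}.
Proof.
move=> x y; rewrite !in_itv /= => x1 y1.
by rewrite -ltr_cos ?acos_itv // !acosK ?in_itv.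
Qed.

Lemma cos_piquarter_gt0 : 0 < cos (pi / 4 : R).
Proof. by apply: cos_gt0_pihalf; have := @pi_gt0 R => pi0; apply/andP; split; lra. Qed.

Lemma cos_piquarter_sqr : 2 * cos (pi / 4 : R) ^+ 2 = 1.
Proof.
have := cos_mulr2n (pi / 4 : R).
rewrite (_ : pi / 4 *+ 2 = pi / 2); first by rewrite cos_pihalf; lra.
by rewrite mulr2n; field.
Qed.

Lemma acos_quarters {x} : 2 * x ^+ 2 < 1 -> pi / 4 < acos x < 3 * pi / 4.
Proof.
move=> x2; set c := cos (pi / 4 : R).
have c_gt0 : 0 < c := cos_piquarter_gt0.
have c2 : 2 * c ^+ 2 = 1 := cos_piquarter_sqr.
have [xc cx] : x < c /\ - c < x by split; rewrite ltNge; apply/negP => ?; nra.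
have c1 : -1 <= c <= 1 by rewrite cos_geN1 cos_le1.
have pi4E : acos c = pi / 4.
  by rewrite cosK // in_itv /=; have := @pi_gt0 R => pi0; apply/andP; split; lra.
have pi34E : acos (- c) = 3 * pi / 4 by rewrite acosN // pi4E; field.
rewrite -pi4E -pi34E !ltr_acos ?xc ?cx // in_itv /=; apply/andP; split; nra.
Qed.

Lemma acos_trichotomy {x} : 2 * x ^+ 2 < 1 ->
  [/\ (0 < x) = (pi / 4 < acos x < pi / 2),
      (x == 0) = (acos x == pi / 2)
    & (x < 0) = (pi / 2 < acos x < 3 * pi / 4)].
Proof.
move=> x2; have /andP[pi4 pi34] := acos_quarters x2.
have x1 : x \in `[-1, 1] by rewrite in_itv /=; apply/andP; split; nra.
have o1 : (0 : R) \in `[-1, 1] by rewrite in_itv /= lerN10 ler01.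
rewrite -acos0 !ltr_acos // pi4 pi34 andbT; split=> //.
by apply/eqP/eqP => [-> // | /(congr1 cos)]; rewrite !acosK.
Qed.

End Arccos.

Theorem theorem2p2 (R : realType) (G : 'M[R]_4) (u : 'cV[R]_4) :
  riemannian_metric G -> S_isometric G -> induces_S_basis u ->
  let phi := gangle G u (Smx *m u) in
  [/\ space_like G u <-> pi / 4 < phi < pi / 2,
      isotropic G u <-> phi = pi / 2
    & time_like G u <-> pi / 2 < phi < 3 * pi / 4].
Proof.
move=> [G_sym G_pos] G_Siso u_basis phi.
have a_gt0 : 0 < gform G u u := G_pos _ (S_basis_neq0 u_basis).
set a := gform G u u in a_gt0 *; set b := gform G u (Smx *m u).
have phiE : phi = acos (b / a).
  by rewrite /phi /gangle (gnorm_S G_Siso) -expr2 sqr_gnorm ?ltW.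
have two_a_gt0 : 0 < 2 * a by rewrite mulr_gt0.
have gtildeE : gtilde G u u = 2 * a * (b / a).
  by rewrite gtilde_diag // -/b; field; rewrite lt0r_neq0.
have x2 : 2 * (b / a) ^+ 2 < 1.
  rewrite expr_div_n mulrA ltr_pdivrMr ?exprn_gt0 // mul1r.
  exact: gform_S_bound.
have [pos zero neg] := acos_trichotomy x2.
rewrite /space_like /isotropic /time_like gtildeE phiE.
rewrite pmulr_rgt0 // pmulr_rlt0 // pos neg; split=> //.
have iso : (2 * a * (b / a) == 0) = (acos (b / a) == pi / 2).
  by rewrite mulf_eq0 (gt_eqF two_a_gt0) zero.
split.
- by case=> _ /eqP; rewrite iso => /eqP.
- by move/eqP; rewrite -iso => /eqP ->; rewrite (S_basis_neq0 u_basis).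
Qed.
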